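(* Let $p,q\ge 0$ be integers and $\alpha=(\alpha_1,\dots,\alpha_p)$, $\beta=(\beta_1,\dots,\beta_q)$ with all $\alpha_i>0$, $\beta_j>0$. On the Hilbert space $\ell^2$ with orthonormal basis $\{|n\rangle\}_{n\ge 0}$, let $\hat a_f|n\rangle=\sqrt{n}\,f(n)|n-1\rangle$ (and $\hat a_f|0\rangle=0$), where $f(n)=\left(\frac{(\beta_1+n-1)\cdots(\beta_q+n-1)}{(\alpha_1+n-1)\cdots(\alpha_p+n-1)}\right)^{1/2}$. Let ${}_p\rho_q(n)=n!\,\frac{(\beta_1)_n\cdots(\beta_q)_n}{(\alpha_1)_n\cdots(\alpha_p)_n}$, ${}_pF_q(\alpha,\beta;x)=\sum_{n\ge0}\frac{x^n}{{}_p\rho_q(n)}$, and for a nonzero complex $w$ with $|w|^2$ strictly inside the disc of convergence of this series define the hypergeometric coherent state $|w;\alpha,\beta\rangle={}_pF_q(\alpha,\beta;|w|^2)^{-1/2}\sum_{n\ge0}\frac{w^n}{\sqrt{{}_p\rho_q(n)}}|n\rangle$. Let $k\ge1$ be an integer, $z\neq0$ such that $|z|^2$ lies strictly inside the disc of convergence, and for $j=0,\dots,k-1$ put ${}_p^kF_q^j(\alpha,\beta;|z|^2)=\sum_{n\ge0}\frac{|z|^{2(nk+j)}}{{}_p\rho_q(nk+j)}$. Then for each $j=0,1,\dots,k-1$, $$\frac{1}{k}\left(\frac{{}_pF_q(\alpha,\beta;|z|^2)}{{}_p^kF_q^j(\alpha,\beta;|z|^2)}\right)^{1/2}\sum_{l=0}^{k-1}e^{-2\pi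 i jl/k}\,|z e^{2\pi i l/k};\alpha,\beta\rangle={}_p^kF_q^j(\alpha,\beta;|z|^2)^{-1/2}\sum_{n\ge0}\frac{z^{nk+j}}{\sqrt{{}_p\rho_q(nk+j)}}|nk+j\rangle=:|z;\alpha,\beta;k,j\rangle,$$ and the vectors $|z;\alpha,\beta;k,j\rangle$, $j=0,\dots,k-1$, form an orthonormal basis of the eigenspace $\{\psi:\hat a_f^k\psi=z^k\psi\}$ of $\hat a_f^k$ with eigenvalue $z^k$, which is spanned by the coherent states $|ze^{2\pi i l/k};\alpha,\beta\rangle$, $l=0,\dots,k-1$.
   Context: $(a)_n=a(a+1)\cdots(a+n-1)$, $(a)_0=1$, is the Pochhammer symbol. The series ${}_pF_q$ converges for all $x$ if $p\le q$ and for $|x|<1$ if $p=q+1$. *)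

From Stdlib Require Import Reals List Arith Factorial.
From Coquelicot Require Import Coquelicot.
Open Scope R_scope.

Fixpoint poch (a : R) (n : nat) : R :=
  match n with
  | O => 1
  | S m => poch a m * (a + INR m)
  end.

Definition prodR (l : list R) : R := fold_right Rmult 1 l.

(* pρq(n) = n! (β1)_n...(βq)_n / ((α1)_n...(αp)_n) ; alpha, beta are the
   parameter vectors, p = length alpha, q = length beta *)
Definition rho (alpha beta : list R) (n : nat) : R :=
  INR (fact n) * prodR (map (fun b => poch b n) beta)
  / prodR (map (fun a => poch a n) alpha).

Definition ffun (alpha beta : list R) (n : nat) : R :=
  sqrt (prodR (map (fun b => b + INR n - 1) beta)
        / prodR (map (fun a => a + INR n - 1) alpha)).

Definition hypF (alpha beta : list R) (x : R) : R :=
  Series (fun n => x ^ n / rho alpha beta n).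

Definition hypFkj (alpha beta : list R) (k j : nat) (x : R) : R :=
  Series (fun n => x ^ (n * k + j) / rho alpha beta (n * k + j)).

Definition inside_disc (alpha beta : list R) (x : R) : Prop :=
  exists r : R, Rabs x < r /\ ex_series (fun n => r ^ n / rho alpha beta n).

(* Vectors of ℓ² are represented by their coordinate sequences ψ(n) = <n|ψ>. *)
Definition in_l2 (psi : nat -> C) : Prop :=
  ex_series (fun n => (Cmod (psi n)) ^ 2).

(* a_f |n> = sqrt(n) f(n) |n-1>,  a_f|0> = 0; in coordinates:
   (a_f ψ)(n) = sqrt(n+1) f(n+1) ψ(n+1) *)
Definition ann (alpha beta : list R) (psi : nat -> C) : nat -> C :=
  fun n => (RtoC (sqrt (INR (S n)) * ffun alpha beta (S n)) * psi (S n))%C.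

Fixpoint annk (alpha beta : list R) (k : nat) (psi : nat -> C) : nat -> C :=
  match k with
  | O => psi
  | S m => ann alpha beta (annk alpha beta m psi)
  end.

(* eigenspace {ψ ∈ D(a_f^k) : a_f^k ψ = μ ψ}, with D(a_f^k) the natural
   domain: ψ, a_f ψ, ..., a_f^k ψ all in ℓ² *)
Definition eigenspace (alpha beta : list R) (k : nat) (mu : C) (psi : nat -> C)
  : Prop :=
  (forall j, (j <= k)%nat -> in_l2 (annk alpha beta j psi)) /\
  (forall n, annk alpha beta k psi n = (mu * psi n)%C).

Definition inner_is (phi psi : nat -> C) (c : C) : Prop :=
  is_series (fun n => (Cconj (phi n) * psi n)%C) c.

Fixpoint csum (k : nat) (g : nat -> C) : C :=
  match k with
  | O => RtoC 0
  | S m => (csum m g + g m)%C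
  end.

Definition in_span (k : nat) (v : nat -> nat -> C) (psi : nat -> C) : Prop :=
  exists c : nat -> C, forall n, psi n = csum k (fun l => c l * v l n)%C.

Definition cis (t : R) : C := (cos t, sin t).

Definition coh (alpha beta : list R) (w : C) : nat -> C :=
  fun n => (RtoC (/ sqrt (hypF alpha beta (Cmod w ^ 2)))
            * (w ^ n) * RtoC (/ sqrt (rho alpha beta n)))%C.

Definition cat_state (alpha beta : list R) (k j : nat) (z : C) : nat -> C :=
  fun m =>
    if (Nat.ltb 0 k && Nat.eqb (m mod k) j)%bool then
      (RtoC (/ sqrt (hypFkj alpha beta k j (Cmod z ^ 2)))
       * (z ^ m) * RtoC (/ sqrt (rho alpha beta m)))%C
    else RtoC 0.

(* Write a vector as psi(n) = c(n) z^n / sqrt(rho(n)).  The ladder relation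
   rho(n+1) = (n+1) f(n+1)^2 rho(n) gives (a_f^i psi)(n) = z^i z^n / sqrt(rho(n)) c(n+i),
   so psi is an eigenvector of a_f^k for z^k exactly when the profile c is
   k-periodic; a periodic profile is bounded, which puts psi and its images in l^2
   because |z|^2 lies inside the disc of convergence.  Periodic profiles are spanned
   by the indicators of the residue classes mod k, i.e. by the states |z;k,j>; these
   are orthonormal since their supports are disjoint and the residue class j of the
   series of pFq sums to p^kFq^j.  The coherent state at z e^(2 pi i l/k) has profile
   e^(2 pi i l n/k), and discrete Fourier inversion over the k-th roots of unity
   passes between the two families. *)

From Stdlib Require Import Reals List Factorial Lia Lra FunctionalExtensionality.
From Coquelicot Require Import Coquelicot.
Open Scope R_scope.

Lemma poch_pos a n : 0 < a -> 0 < poch a n.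
Proof.
  intros Ha. induction n as [|n IH]; simpl; [lra|].
  apply Rmult_lt_0_compat; [exact IH|]. pose proof (pos_INR n). lra.
Qed.

Lemma prodR_map_pos (f : R -> R) (l : list R) :
  List.Forall (fun a => 0 < a) l -> (forall a, 0 < a -> 0 < f a) -> 0 < prodR (map f l).
Proof.
  intros Hl Hf. induction Hl; simpl; [lra|]. apply Rmult_lt_0_compat; auto.
Qed.

Lemma prodR_map_mult (f g : R -> R) (l : list R) :
  prodR (map (fun b => f b * g b) l) = prodR (map f l) * prodR (map g l).
Proof. induction l as [|b l IH]; simpl; [ring|]. rewrite IH. ring. Qed.

Lemma ex_series_le_nonneg (a b : nat -> R) :
  (forall n, 0 <= a n <= b n) -> ex_series b -> ex_series a.
Proof.
  intros Hab. apply (@ex_series_le R_AbsRing R_CompleteNormedModule). intros n.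
  change (norm (a n)) with (Rabs (a n)). rewrite Rabs_pos_eq; apply Hab.
Qed.

Lemma RtoC_neq0 (a : R) : a <> 0 -> RtoC a <> RtoC 0.
Proof. intros Ha E. apply Ha, RtoC_inj, E. Qed.

Section Rho.
Variables alpha beta : list R.
Hypothesis Halpha : List.Forall (fun a => 0 < a) alpha.
Hypothesis Hbeta : List.Forall (fun b => 0 < b) beta.

Let shifted_prod (l : list R) (n : nat) := prodR (map (fun a => a + INR n) l).

Lemma shifted_prod_pos l n : List.Forall (fun a => 0 < a) l -> 0 < shifted_prod l n.
Proof.
  intros Hl. apply prodR_map_pos; [exact Hl|]. intros a Ha. pose proof (pos_INR n). lra.
Qed.

Lemma rho_pos n : 0 < rho alpha beta n.
Proof.
  unfold rho. apply Rdiv_lt_0_compat.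
  - apply Rmult_lt_0_compat; [apply lt_0_INR, lt_O_fact|].
    apply prodR_map_pos; [exact Hbeta|]. intros; apply poch_pos; assumption.
  - apply prodR_map_pos; [exact Halpha|]. intros; apply poch_pos; assumption.
Qed.

Lemma rho_S n :
  rho alpha beta (S n) = INR (S n) * (shifted_prod beta n / shifted_prod alpha n) * rho alpha beta n.
Proof.
  assert (Hp : 0 < prodR (map (fun a => poch a n) alpha)).
  { apply prodR_map_pos; [exact Halpha|]. intros; apply poch_pos; assumption. }
  pose proof (shifted_prod_pos alpha n Halpha).
  unfold rho, shifted_prod in *; simpl poch. rewrite !prodR_map_mult, fact_simpl, mult_INR.
  field. split; lra.
Qed.

Lemma sqrt_rho_S n :
  sqrt (rho alpha beta (S n)) =
  sqrt (INR (S n)) * ffun alpha beta (S n) * sqrt (rho alpha beta n).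
Proof.
  assert (Hshift : forall l, map (fun a => a + INR (S n) - 1) l = map (fun a => a + INR n) l).
  { intros l. apply map_ext. intros a. rewrite S_INR. ring. }
  unfold ffun. rewrite !Hshift, rho_S. fold (shifted_prod beta n) (shifted_prod alpha n).
  pose proof (shifted_prod_pos alpha n Halpha). pose proof (shifted_prod_pos beta n Hbeta).
  rewrite !sqrt_mult; [reflexivity| apply pos_INR | | | apply Rlt_le, rho_pos].
  - apply Rlt_le, Rdiv_lt_0_compat; assumption.
  - apply Rmult_le_pos; [apply pos_INR|]. apply Rlt_le, Rdiv_lt_0_compat; assumption.
Qed.

Definition hyp_term (x : R) (n : nat) : R := x ^ n / rho alpha beta n.

Lemma hyp_term_pos x n : 0 < x -> 0 < hyp_term x n.
Proof. intros Hx. apply Rdiv_lt_0_compat; [apply pow_lt, Hx | apply rho_pos]. Qed.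

Lemma ex_series_hyp_term x : 0 <= x -> inside_disc alpha beta x -> ex_series (hyp_term x).
Proof.
  intros Hx [r [Hr Hs]]. rewrite Rabs_pos_eq in Hr by exact Hx.
  apply (ex_series_le_nonneg _ _) with (2 := Hs). intros n.
  pose proof (rho_pos n). unfold hyp_term. split.
  - apply Rmult_le_pos; [apply pow_le, Hx | apply Rlt_le, Rinv_0_lt_compat; assumption].
  - apply Rmult_le_compat_r; [apply Rlt_le, Rinv_0_lt_compat; assumption|].
    apply pow_incr. split; [exact Hx | lra].
Qed.

Definition ucoh (w : C) (n : nat) : C := (w ^ n * RtoC (/ sqrt (rho alpha beta n)))%C.

Lemma ucoh_neq0 w n : w <> RtoC 0 -> ucoh w n <> RtoC 0.
Proof.
  intros Hw. apply Cmult_neq_0; [apply Cpow_nz; exact Hw|].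
  apply RtoC_neq0, Rgt_not_eq, Rinv_0_lt_compat, sqrt_lt_R0, rho_pos.
Qed.

Lemma ucoh_mult w u n : ucoh (w * u) n = (ucoh w n * u ^ n)%C.
Proof. unfold ucoh. rewrite Cpow_mult_l. ring. Qed.

Lemma Cmod_ucoh_sqr w n : Cmod (ucoh w n) ^ 2 = hyp_term (Cmod w ^ 2) n.
Proof.
  pose proof (rho_pos n) as Hr. pose proof (sqrt_lt_R0 _ Hr) as Hs.
  unfold ucoh. rewrite Cmod_mult, Cmod_pow, Cmod_R, Rabs_pos_eq
    by (apply Rlt_le, Rinv_0_lt_compat; exact Hs).
  unfold hyp_term. rewrite <- !pow_mult, Nat.mul_comm, pow_mult. unfold Rdiv.
  rewrite Rpow_mult_distr, pow_inv, pow2_sqrt; [reflexivity| lra].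
Qed.

Lemma coh_ucoh w n :
  coh alpha beta w n = (RtoC (/ sqrt (hypF alpha beta (Cmod w ^ 2))) * ucoh w n)%C.
Proof. unfold coh, ucoh. ring. Qed.

Lemma ann_ucoh w n :
  (RtoC (sqrt (INR (S n)) * ffun alpha beta (S n)) * ucoh w (S n))%C = (w * ucoh w n)%C.
Proof.
  pose proof (sqrt_lt_R0 _ (rho_pos n)) as Hn.
  pose proof (sqrt_lt_R0 _ (rho_pos (S n))) as HSn.
  set (s := sqrt (INR (S n)) * ffun alpha beta (S n)) in *.
  assert (Hs : s <> 0).
  { intros E. rewrite sqrt_rho_S in HSn. fold s in HSn. rewrite E in HSn. lra. }
  unfold ucoh. rewrite sqrt_rho_S. fold s.
  rewrite Rinv_mult, RtoC_mult, !RtoC_inv by lra.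
  rewrite Cpow_S. field. split; apply RtoC_neq0; lra.
Qed.

Lemma annk_ucoh_mul w (c : nat -> C) i n :
  annk alpha beta i (fun m => ucoh w m * c m)%C n = (w ^ i * ucoh w n * c (n + i)%nat)%C.
Proof.
  revert n. induction i as [|i IH]; intros n; simpl annk.
  - rewrite Nat.add_0_r. ring.
  - unfold ann. rewrite IH. replace (S n + i)%nat with (n + S i)%nat by lia.
    transitivity (w ^ i * (RtoC (sqrt (INR (S n)) * ffun alpha beta (S n)) * ucoh w (S n))
                  * c (n + S i)%nat)%C; [ring|].
    rewrite ann_ucoh, Cpow_S. ring.
Qed.

End Rho.

Lemma csum_ext k f g : (forall l, (l < k)%nat -> f l = g l) -> csum k f = csum k g.
Proof. induction k as [|k IH]; intros H; simpl; [reflexivity|]. rewrite IH, H; auto. Qed.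

Lemma csum_scal k a f : (a * csum k f)%C = csum k (fun l => a * f l)%C.
Proof. induction k as [|k IH]; simpl; [apply Cmult_0_r|]. rewrite <- IH. ring. Qed.

Lemma csum_plus k f g : csum k (fun l => f l + g l)%C = (csum k f + csum k g)%C.
Proof. induction k as [|k IH]; simpl; [ring|]. rewrite IH. ring. Qed.

Lemma csum_swap a b (f : nat -> nat -> C) :
  csum a (fun j => csum b (fun l => f j l)) = csum b (fun l => csum a (fun j => f j l)).
Proof.
  induction a as [|a IH]; simpl.
  - induction b as [|b IHb]; simpl; [reflexivity|]. rewrite <- IHb. ring.
  - rewrite IH, <- csum_plus. reflexivity.
Qed.

Lemma csum_zero k f : (forall l, (l < k)%nat -> f l = RtoC 0) -> csum k f = RtoC 0.
Proof. induction k as [|k IH]; intros H; simpl; [reflexivity|]. rewrite IH, H by auto. ring. Qed.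

Lemma csum_single k f j : (j < k)%nat ->
  (forall l, (l < k)%nat -> l <> j -> f l = RtoC 0) -> csum k f = f j.
Proof.
  induction k as [|k IH]; intros Hj H; [lia|]. simpl.
  destruct (Nat.eq_dec j k) as [->|Hne].
  - rewrite csum_zero by (intros l Hl; apply H; lia). ring.
  - rewrite IH, (H k) by (lia || (intros; apply H; lia)). ring.
Qed.

Lemma csum_geom k w : (csum k (fun l => w ^ l) * (w - 1))%C = (w ^ k - 1)%C.
Proof.
  induction k as [|k IH]; simpl csum; [simpl; ring|].
  rewrite Cmult_plus_distr_r, IH, Cpow_S. ring.
Qed.

Definition periodic (k : nat) (c : nat -> C) : Prop := forall n, c (n + k)%nat = c n.

Lemma periodic_add_mul k c n q : periodic k c -> c (n + q * k)%nat = c n.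
Proof.
  intros Hc. induction q as [|q IH]; simpl; [now rewrite Nat.add_0_r|].
  replace (n + (k + q * k))%nat with (n + q * k + k)%nat by lia. rewrite Hc. exact IH.
Qed.

Lemma periodic_mod k c n : periodic k c -> c n = c (n mod k).
Proof.
  intros Hc. rewrite (Nat.div_mod_eq n k) at 1.
  rewrite Nat.add_comm, Nat.mul_comm. apply periodic_add_mul, Hc.
Qed.

Lemma finite_upper_bound (g : nat -> R) k : exists K, forall s, (s < k)%nat -> g s <= K.
Proof.
  induction k as [|k [K HK]]; [exists 0; intros; lia|].
  exists (Rmax K (g k)). intros s Hs. destruct (Nat.eq_dec s k) as [->|Hne].
  - apply Rmax_r.
  - eapply Rle_trans; [apply HK; lia | apply Rmax_l].
Qed.

Lemma periodic_bounded k c : (0 < k)%nat -> periodic k c -> exists K, forall n, Cmod (c n) <= K.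
Proof.
  intros Hk Hc. destruct (finite_upper_bound (fun s => Cmod (c s)) k) as [K HK].
  exists K. intros n. rewrite (periodic_mod k c n Hc). apply HK, Nat.mod_upper_bound. lia.
Qed.

Lemma periodic_csum k K (d : nat -> C) (g : nat -> nat -> C) :
  (forall l, periodic k (g l)) -> periodic k (fun n => csum K (fun l => d l * g l n)%C).
Proof. intros Hg n. apply csum_ext. intros l _. rewrite Hg. reflexivity. Qed.

Section Eigenspace.
Variables alpha beta : list R.
Hypothesis Halpha : List.Forall (fun a => 0 < a) alpha.
Hypothesis Hbeta : List.Forall (fun b => 0 < b) beta.
Variable k : nat.
Hypothesis Hk : (1 <= k)%nat.
Variable z : C.
Hypothesis Hz : z <> RtoC 0.
Hypothesis Hdisc : inside_disc alpha beta (Cmod z ^ 2).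

Lemma in_l2_annk_ucoh_mul (c : nat -> C) K i : (forall n, Cmod (c n) <= K) ->
  in_l2 (annk alpha beta i (fun n => ucoh alpha beta z n * c n)%C).
Proof.
  intros HK. unfold in_l2.
  apply (ex_series_le_nonneg _ (fun n => (Cmod z ^ i * K) ^ 2 * hyp_term alpha beta (Cmod z ^ 2) n)).
  2: { apply (@ex_series_scal_l R_AbsRing R_NormedModule).
       apply ex_series_hyp_term; [exact Halpha | exact Hbeta | apply pow2_ge_0 | exact Hdisc]. }
  intros n. split; [apply pow2_ge_0|].
  rewrite annk_ucoh_mul by assumption.
  rewrite <- Cmod_ucoh_sqr by assumption. rewrite !Cmod_mult, Cmod_pow.
  assert (Hc := HK (n + i)%nat). pose proof (Cmod_ge_0 (c (n + i)%nat)).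
  pose proof (pow_le _ i (Cmod_ge_0 z)). pose proof (Cmod_ge_0 (ucoh alpha beta z n)).
  replace ((Cmod z ^ i * K) ^ 2 * Cmod (ucoh alpha beta z n) ^ 2)
    with ((Cmod z ^ i * Cmod (ucoh alpha beta z n) * K) ^ 2) by ring.
  apply pow_incr. split; [apply Rmult_le_pos; [apply Rmult_le_pos|]; assumption|].
  apply Rmult_le_compat_l; [apply Rmult_le_pos|]; assumption.
Qed.

Lemma eigenspace_iff_periodic psi c : (forall n, psi n = (ucoh alpha beta z n * c n)%C) ->
  eigenspace alpha beta k (z ^ k)%C psi <-> periodic k c.
Proof.
  intros Hpsi.
  replace psi with (fun n => ucoh alpha beta z n * c n)%C
    by (apply functional_extensionality; intros n; symmetry; apply Hpsi).
  split.
  - intros [_ Heig] n. specialize (Heig n).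
    rewrite annk_ucoh_mul in Heig by assumption.
    assert (Hzk := Cpow_nz z k Hz).
    assert (Hu := ucoh_neq0 alpha beta Halpha Hbeta z n Hz).
    transitivity (/ (z ^ k * ucoh alpha beta z n) * (z ^ k * ucoh alpha beta z n * c (n + k)%nat))%C.
    + field. split; assumption.
    + rewrite Heig. field. split; assumption.
  - intros Hc. destruct (periodic_bounded k c ltac:(lia) Hc) as [K HK]. split.
    + intros i _. apply (in_l2_annk_ucoh_mul c K i HK).
    + intros n. rewrite annk_ucoh_mul, Hc by assumption. ring.
Qed.

Lemma eigenspace_of_in_span K (v g : nat -> nat -> C) psi :
  (forall l n, v l n = (ucoh alpha beta z n * g l n)%C) -> (forall l, periodic k (g l)) ->
  in_span K v psi -> eigenspace alpha beta k (z ^ k)%C psi.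
Proof.
  intros Hv Hg [d Hd].
  apply (eigenspace_iff_periodic psi (fun n => csum K (fun l => d l * g l n)%C)).
  - intros n. rewrite Hd, csum_scal. apply csum_ext. intros l _. rewrite Hv. ring.
  - apply periodic_csum, Hg.
Qed.

End Eigenspace.

Definition restrict_residue (k j : nat) (a : nat -> R) (m : nat) : R :=
  if Nat.eqb (m mod k) j then a m else 0.

Lemma mod_add_gap k j N t : (j < k)%nat -> (0 < t < k)%nat -> ((N * k + j + t) mod k <> j)%nat.
Proof.
  intros Hj Ht. replace (N * k + j + t)%nat with (j + t + N * k)%nat by lia.
  rewrite Nat.Div0.mod_add. destruct (Nat.lt_ge_cases (j + t) k).
  - rewrite Nat.mod_small; lia.
  - replace (j + t)%nat with (j + t - k + 1 * k)%nat by lia.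
    rewrite Nat.Div0.mod_add, Nat.mod_small; lia.
Qed.

Lemma sum_n_m_last (b : nat -> R) n m : (n <= m)%nat ->
  (forall u, (n <= u < m)%nat -> b u = 0) -> sum_n_m b n m = b m.
Proof.
  intros Hnm. induction Hnm as [|m Hnm IH]; intros Hb; [apply sum_n_n|].
  rewrite sum_n_Sm, IH, Hb by (lia || (intros; apply Hb; lia)).
  unfold plus; simpl. ring.
Qed.

Section ResidueClass.
Variables (a : nat -> R) (k j : nat).
Hypothesis Hj : (j < k)%nat.

Lemma sum_n_restrict_residue N :
  sum_n (restrict_residue k j a) (N * k + j) = sum_n (fun n => a (n * k + j)%nat) N.
Proof.
  assert (Hon : forall n, restrict_residue k j a (n * k + j) = a (n * k + j)%nat).
  { intros n. unfold restrict_residue.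
    rewrite Nat.add_comm, Nat.Div0.mod_add, Nat.mod_small, Nat.eqb_refl by exact Hj.
    reflexivity. }
  induction N as [|N IH].
  - rewrite sum_O. unfold sum_n. simpl.
    rewrite sum_n_m_last; [exact (Hon 0%nat) | lia |].
    intros u Hu. unfold restrict_residue. rewrite Nat.mod_small by lia.
    replace (Nat.eqb u j) with false by (symmetry; apply Nat.eqb_neq; lia). reflexivity.
  - rewrite sum_Sn, <- IH, <- Hon. unfold sum_n.
    rewrite (sum_n_m_Chasles _ 0 (N * k + j) (S N * k + j)) by (simpl; lia).
    f_equal. apply sum_n_m_last; [simpl; lia|].
    intros u Hu. unfold restrict_residue.
    replace u with (N * k + j + (u - (N * k + j)))%nat by lia.
    replace (Nat.eqb _ j) with false; [reflexivity|].
    symmetry. apply Nat.eqb_neq, mod_add_gap; simpl in Hu; lia.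
Qed.

Lemma is_series_subseq_residue l :
  is_series (restrict_residue k j a) l -> is_series (fun n => a (n * k + j)%nat) l.
Proof.
  intros Hl. unfold is_series.
  apply (filterlim_ext (fun N => sum_n (restrict_residue k j a) (N * k + j))).
  { intros N. apply sum_n_restrict_residue. }
  apply (filterlim_comp _ _ _ (fun N => N * k + j)%nat (sum_n (restrict_residue k j a))
           eventually eventually); [|exact Hl].
  apply eventually_subseq. intros n. simpl. lia.
Qed.

Lemma is_series_restrict_residue : (forall n, 0 <= a n) -> ex_series a ->
  is_series (restrict_residue k j a) (Series (fun n => a (n * k + j)%nat)) /\
  ex_series (fun n => a (n * k + j)%nat).
Proof.
  intros Ha Hex.
  destruct (ex_series_le_nonneg (restrict_residue k j a) a) as [l Hl]; [|exact Hex|].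
  { intros n. unfold restrict_residue. destruct (Nat.eqb _ _); split; auto with real. }
  pose proof (is_series_subseq_residue l Hl) as Hsub.
  rewrite (is_series_unique _ _ Hsub). split; [exact Hl | exists l; exact Hsub].
Qed.

End ResidueClass.

Lemma Series_pos (b : nat -> R) : (forall n, 0 < b n) -> ex_series b -> 0 < Series b.
Proof.
  intros Hb Hex.
  assert (Hpart : forall N, b O <= sum_n b N).
  { induction N as [|N IH]; [rewrite sum_O; lra|].
    rewrite sum_Sn. specialize (Hb (S N)). unfold plus; simpl. lra. }
  apply Rlt_le_trans with (b O); [apply Hb|].
  apply (is_lim_seq_le (fun _ => b O) (sum_n b) (b O) (Series b) Hpart).
  - apply is_lim_seq_const.
  - apply Series_correct, Hex.
Qed.

Lemma is_series_RtoC (b : nat -> R) l :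
  is_series b l -> is_series (fun n => RtoC (b n)) (RtoC l).
Proof.
  assert (Hsum : forall N, sum_n (fun n => RtoC (b n)) N = RtoC (sum_n b N)).
  { induction N as [|N IH]; [rewrite !sum_O; reflexivity|].
    rewrite !sum_Sn, IH. unfold plus; simpl. now rewrite RtoC_plus. }
  intros Hl. apply filterlim_locally. intros eps.
  generalize (proj1 (filterlim_locally _ _) Hl eps). apply filter_imp. intros N HN.
  rewrite Hsum. split; [exact HN | apply ball_center].
Qed.

Lemma Cconj_RtoC_mult (u : C) (e e' : R) :
  (Cconj (u * RtoC e) * (u * RtoC e'))%C = RtoC (Cmod u ^ 2 * (e * e')).
Proof.
  rewrite !RtoC_mult, Cmod2_conj, Cmult_conj.
  replace (Cconj (RtoC e)) with (RtoC e) by (unfold Cconj, RtoC; simpl; f_equal; ring).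
  ring.
Qed.

Lemma cis_add a b : (cis a * cis b)%C = cis (a + b).
Proof. unfold cis, Cmult; simpl. rewrite cos_plus, sin_plus. f_equal; ring. Qed.

Lemma cis_0 : cis 0 = RtoC 1.
Proof. unfold cis. rewrite cos_0, sin_0. reflexivity. Qed.

Lemma cis_pow a n : (cis a ^ n)%C = cis (INR n * a).
Proof.
  induction n as [|n IH]; [simpl; rewrite Rmult_0_l, cis_0; reflexivity|].
  rewrite Cpow_S, IH, cis_add, S_INR. f_equal. ring.
Qed.

Lemma cis_period a n : cis (a + 2 * INR n * PI) = cis a.
Proof. unfold cis. now rewrite cos_period, sin_period. Qed.

Lemma Cmod_cis a : Cmod (cis a) = 1.
Proof.
  unfold Cmod, cis. cbn [fst snd].
  replace (cos a ^ 2 + sin a ^ 2) with 1 by (rewrite <- (sin2_cos2 a); unfold Rsqr; ring).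
  apply sqrt_1.
Qed.

Lemma cis_neq1 t : 0 < t < 2 * PI -> cis t <> RtoC 1.
Proof.
  intros [H0 H2] E. unfold cis in E. injection E as Ecos Esin.
  destruct (Rlt_le_dec t PI) as [Hlt|Hge].
  - pose proof (sin_gt_0 t H0 Hlt). lra.
  - destruct (Req_dec t PI) as [->|Hne]; [rewrite cos_PI in Ecos; lra|].
    pose proof (sin_lt_0 t ltac:(lra) H2). lra.
Qed.

Lemma csum_roots_of_unity k N : (0 < k)%nat ->
  csum k (fun l => cis (2 * PI * INR N / INR k) ^ l)%C =
  if Nat.eqb (N mod k) 0 then RtoC (INR k) else RtoC 0.
Proof.
  intros Hk. assert (HkR : 0 < INR k) by (apply lt_0_INR; exact Hk).
  set (s := (N mod k)%nat).
  assert (Hs : (s < k)%nat) by (apply Nat.mod_upper_bound; lia).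
  set (w := cis (2 * PI * INR s / INR k)).
  assert (Hw : cis (2 * PI * INR N / INR k) = w).
  { unfold w. rewrite <- (cis_period (2 * PI * INR s / INR k) (N / k)). f_equal.
    rewrite (Nat.div_mod_eq N k) at 1. rewrite plus_INR, mult_INR. fold s. field. lra. }
  rewrite Hw. destruct (Nat.eqb_spec s 0) as [Hs0|Hs0].
  - unfold w. rewrite Hs0. replace (2 * PI * INR 0 / INR k) with 0 by (simpl; field; lra).
    rewrite cis_0. clear. induction k as [|k IH]; [reflexivity|].
    simpl csum. rewrite IH, Cpow_1_l, S_INR, RtoC_plus. reflexivity.
  - assert (Hw1 : (w - 1)%C <> RtoC 0).
    { intros E. apply (cis_neq1 (2 * PI * INR s / INR k)).
      - assert (0 < INR s < INR k) by (split; [apply lt_0_INR | apply lt_INR]; lia).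
        pose proof PI_RGT_0. split.
        + apply Rdiv_lt_0_compat; nra.
        + apply (Rmult_lt_reg_r (INR k)); [exact HkR|].
          unfold Rdiv. rewrite Rmult_assoc, Rinv_l by lra. nra.
      - fold w. replace w with ((w - 1) + 1)%C by ring. rewrite E. ring. }
    assert (Hwk : (w ^ k)%C = RtoC 1).
    { unfold w. rewrite cis_pow, <- cis_0, <- (cis_period 0 s). f_equal. field. lra. }
    pose proof (csum_geom k w) as G. rewrite Hwk in G.
    replace (csum k (fun l => w ^ l))%C
      with (csum k (fun l => w ^ l) * (w - 1) * / (w - 1))%C by (field; exact Hw1).
    rewrite G. ring.
Qed.

Lemma eqb_mod_shift k j m : (j < k)%nat ->
  Nat.eqb ((m + (k - j)) mod k) 0 = Nat.eqb (m mod k) j.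
Proof.
  intros Hj. rewrite <- Nat.Div0.add_mod_idemp_l.
  assert (Hr : (m mod k < k)%nat) by (apply Nat.mod_upper_bound; lia).
  set (r := (m mod k)%nat) in *.
  destruct (Nat.lt_total r j) as [Hlt|[->|Hgt]].
  - rewrite Nat.mod_small by lia.
    replace (Nat.eqb r j) with false by (symmetry; apply Nat.eqb_neq; lia).
    apply Nat.eqb_neq. lia.
  - replace (j + (k - j))%nat with k by lia. rewrite Nat.Div0.mod_same, !Nat.eqb_refl. reflexivity.
  - replace (r + (k - j))%nat with (r - j + 1 * k)%nat by lia.
    rewrite Nat.Div0.mod_add, Nat.mod_small by lia.
    replace (Nat.eqb r j) with false by (symmetry; apply Nat.eqb_neq; lia).
    apply Nat.eqb_neq. lia.
Qed.

Lemma csum_dft_residue k j m : (j < k)%nat ->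
  csum k (fun l => cis (- (2 * PI * INR j * INR l / INR k)) * cis (2 * PI * INR l / INR k) ^ m)%C =
  if Nat.eqb (m mod k) j then RtoC (INR k) else RtoC 0.
Proof.
  intros Hj. assert (HkR : INR k <> 0) by (apply not_0_INR; lia).
  rewrite <- eqb_mod_shift by exact Hj. rewrite <- csum_roots_of_unity by lia.
  apply csum_ext. intros l _.
  rewrite !cis_pow, cis_add, <- (cis_period _ l). f_equal.
  rewrite plus_INR, minus_INR by lia. field. exact HkR.
Qed.

Lemma in_span_compose K L (v w d : nat -> nat -> C) psi :
  (forall j n, (j < K)%nat -> v j n = csum L (fun l => d j l * w l n)%C) ->
  in_span K v psi -> in_span L w psi.
Proof.
  intros Hv [c Hc]. exists (fun l => csum K (fun j => c j * d j l)%C). intros n.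
  rewrite Hc, (csum_ext K _ (fun j => csum L (fun l => c j * d j l * w l n)%C)).
  - rewrite csum_swap. apply csum_ext. intros l _.
    rewrite Cmult_comm, csum_scal. apply csum_ext. intros j _. ring.
  - intros j Hj. rewrite Hv, csum_scal by exact Hj. apply csum_ext. intros l _. ring.
Qed.

Section CatStates.
Variables alpha beta : list R.
Hypothesis Halpha : List.Forall (fun a => 0 < a) alpha.
Hypothesis Hbeta : List.Forall (fun b => 0 < b) beta.
Variable k : nat.
Hypothesis Hk : (1 <= k)%nat.
Variable z : C.
Hypothesis Hz : z <> RtoC 0.
Hypothesis Hdisc : inside_disc alpha beta (Cmod z ^ 2).

Lemma hyp_term_z_pos n : 0 < hyp_term alpha beta (Cmod z ^ 2) n.
Proof. apply hyp_term_pos; [assumption | assumption | apply pow_lt, Cmod_gt_0, Hz]. Qed.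

Lemma ex_series_hyp_term_z : ex_series (hyp_term alpha beta (Cmod z ^ 2)).
Proof. apply ex_series_hyp_term; [assumption | assumption | apply pow2_ge_0 | exact Hdisc]. Qed.

Lemma hypF_pos : 0 < hypF alpha beta (Cmod z ^ 2).
Proof. apply Series_pos; [exact hyp_term_z_pos | exact ex_series_hyp_term_z]. Qed.

Lemma is_series_hypFkj j : (j < k)%nat ->
  is_series (restrict_residue k j (hyp_term alpha beta (Cmod z ^ 2)))
    (hypFkj alpha beta k j (Cmod z ^ 2)).
Proof.
  intros Hj.
  destruct (is_series_restrict_residue (hyp_term alpha beta (Cmod z ^ 2)) k j Hj) as [Hres _].
  - intros n. apply Rlt_le, hyp_term_z_pos.
  - apply ex_series_hyp_term_z.
  - exact Hres.
Qed.

Lemma hypFkj_pos j : (j < k)%nat -> 0 < hypFkj alpha beta k j (Cmod z ^ 2).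
Proof.
  intros Hj.
  destruct (is_series_restrict_residue (hyp_term alpha beta (Cmod z ^ 2)) k j Hj) as [_ Hsub].
  - intros n. apply Rlt_le, hyp_term_z_pos.
  - apply ex_series_hyp_term_z.
  - apply Series_pos; [intros n; apply hyp_term_z_pos | exact Hsub].
Qed.

Definition cat_profile (j n : nat) : R :=
  if Nat.eqb (n mod k) j then / sqrt (hypFkj alpha beta k j (Cmod z ^ 2)) else 0.

Lemma cat_state_ucoh j n :
  cat_state alpha beta k j z n = (ucoh alpha beta z n * RtoC (cat_profile j n))%C.
Proof.
  unfold cat_state, cat_profile, ucoh.
  replace (Nat.ltb 0 k) with true by (symmetry; apply Nat.ltb_lt; lia). simpl.
  destruct (Nat.eqb _ _); ring.
Qed.

Lemma cat_profile_periodic j : periodic k (fun n => RtoC (cat_profile j n)).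
Proof.
  intros n. unfold cat_profile.
  replace (n + k)%nat with (n + 1 * k)%nat by lia. rewrite Nat.Div0.mod_add. reflexivity.
Qed.

Lemma coh_rotate_ucoh t n :
  coh alpha beta (z * cis t) n =
  (ucoh alpha beta z n * (RtoC (/ sqrt (hypF alpha beta (Cmod z ^ 2))) * cis t ^ n))%C.
Proof. rewrite coh_ucoh, Cmod_mult, Cmod_cis, Rmult_1_r, ucoh_mult. ring. Qed.

Definition coh_profile (l n : nat) : C :=
  (RtoC (/ sqrt (hypF alpha beta (Cmod z ^ 2))) * cis (2 * PI * INR l / INR k) ^ n)%C.

Lemma coh_profile_periodic l : periodic k (coh_profile l).
Proof.
  intros n. unfold coh_profile. rewrite Cpow_add_r, (cis_pow _ k).
  replace (INR k * (2 * PI * INR l / INR k)) with (0 + 2 * INR l * PI)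
    by (field; apply not_0_INR; lia).
  rewrite cis_period, cis_0. ring.
Qed.

Lemma cat_state_eigenspace j : eigenspace alpha beta k (z ^ k)%C (cat_state alpha beta k j z).
Proof.
  apply (eigenspace_iff_periodic alpha beta Halpha Hbeta k Hk z Hz Hdisc _ _ (cat_state_ucoh j)).
  apply cat_profile_periodic.
Qed.

Lemma cat_state_as_coh_sum j m : (j < k)%nat ->
  csum k (fun l =>
    RtoC (/ INR k * sqrt (hypF alpha beta (Cmod z ^ 2) / hypFkj alpha beta k j (Cmod z ^ 2)))
    * cis (- (2 * PI * INR j * INR l / INR k))
    * coh alpha beta (z * cis (2 * PI * INR l / INR k)) m)%C
  = cat_state alpha beta k j z m.
Proof.
  intros Hj.
  set (F := hypF alpha beta (Cmod z ^ 2)). set (Fj := hypFkj alpha beta k j (Cmod z ^ 2)).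
  set (A := / INR k * sqrt (F / Fj)).
  rewrite (csum_ext _ _ (fun l => RtoC A * RtoC (/ sqrt F) * ucoh alpha beta z m *
    (cis (- (2 * PI * INR j * INR l / INR k)) * cis (2 * PI * INR l / INR k) ^ m))%C)
    by (intros l _; rewrite coh_rotate_ucoh; fold F; ring).
  rewrite <- csum_scal, csum_dft_residue, cat_state_ucoh by exact Hj.
  unfold cat_profile. fold F Fj. destruct (Nat.eqb _ _); [|ring].
  pose proof (sqrt_lt_R0 _ hypF_pos) as HF. pose proof (sqrt_lt_R0 _ (hypFkj_pos j Hj)) as HFj.
  fold F in HF. fold Fj in HFj.
  assert (HA : A * / sqrt F * INR k = / sqrt Fj).
  { unfold A. rewrite sqrt_div_alt by exact (hypFkj_pos j Hj).
    field. split; [|split]; try lra. apply not_0_INR. lia. }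
  rewrite <- HA, !RtoC_mult. ring.
Qed.

Lemma cat_state_orthonormal i j : (i < k)%nat -> (j < k)%nat ->
  inner_is (cat_state alpha beta k i z) (cat_state alpha beta k j z)
    (if Nat.eqb i j then RtoC 1 else RtoC 0).
Proof.
  intros Hi Hj. pose proof (is_series_hypFkj i Hi) as HS. pose proof (hypFkj_pos i Hi) as HFi.
  set (Fi := hypFkj alpha beta k i (Cmod z ^ 2)) in *.
  set (delta := if Nat.eqb i j then 1 else 0).
  unfold inner_is.
  apply (is_series_ext
    (fun n => RtoC (restrict_residue k i (hyp_term alpha beta (Cmod z ^ 2)) n * (delta * / Fi)))).
  2: { replace (if Nat.eqb i j then RtoC 1 else RtoC 0) with (RtoC (Fi * (delta * / Fi)))
         by (unfold delta; destruct (Nat.eqb i j); f_equal; field; lra).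
       apply is_series_RtoC, is_series_scal_r, HS. }
  intros n. rewrite !cat_state_ucoh, Cconj_RtoC_mult, Cmod_ucoh_sqr by assumption. f_equal.
  unfold restrict_residue, cat_profile, delta. fold Fi.
  destruct (Nat.eqb_spec i j) as [<-|Hij].
  - destruct (Nat.eqb _ _); [|ring].
    fold Fi. rewrite <- Rinv_mult, sqrt_sqrt by lra. field. lra.
  - destruct (Nat.eqb_spec (n mod k) i), (Nat.eqb_spec (n mod k) j); try lia; ring.
Qed.

Lemma in_span_cat_states psi : eigenspace alpha beta k (z ^ k)%C psi ->
  in_span k (fun j => cat_state alpha beta k j z) psi.
Proof.
  intros Heig.
  set (c := fun n => (psi n / ucoh alpha beta z n)%C).
  assert (Hpsi : forall n, psi n = (ucoh alpha beta z n * c n)%C).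
  { intros n. unfold c. field. apply ucoh_neq0; assumption. }
  assert (Hc : periodic k c).
  { apply (eigenspace_iff_periodic alpha beta Halpha Hbeta k Hk z Hz Hdisc psi c Hpsi), Heig. }
  exists (fun j => c j * RtoC (sqrt (hypFkj alpha beta k j (Cmod z ^ 2))))%C. intros n.
  assert (Hr : (n mod k < k)%nat) by (apply Nat.mod_upper_bound; lia).
  rewrite (csum_single _ _ (n mod k) Hr).
  - rewrite cat_state_ucoh, Hpsi, (periodic_mod k c n Hc). unfold cat_profile.
    rewrite Nat.eqb_refl.
    pose proof (sqrt_lt_R0 _ (hypFkj_pos (n mod k) Hr)).
    rewrite RtoC_inv by lra. field. apply RtoC_neq0. lra.
  - intros l _ Hl. rewrite cat_state_ucoh. unfold cat_profile.
    replace (Nat.eqb (n mod k) l) with false by (symmetry; apply Nat.eqb_neq; lia). ring.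
Qed.

Lemma eigenspace_iff_in_span_cat_states psi :
  eigenspace alpha beta k (z ^ k)%C psi <-> in_span k (fun j => cat_state alpha beta k j z) psi.
Proof.
  split; [apply in_span_cat_states|].
  apply (eigenspace_of_in_span alpha beta Halpha Hbeta k Hk z Hz Hdisc k _
           (fun j n => RtoC (cat_profile j n))).
  - intros j n. apply cat_state_ucoh.
  - apply cat_profile_periodic.
Qed.

Lemma eigenspace_iff_in_span_coh psi :
  eigenspace alpha beta k (z ^ k)%C psi <->
  in_span k (fun l => coh alpha beta (z * cis (2 * PI * INR l / INR k))) psi.
Proof.
  split.
  - intros Heig. eapply in_span_compose; [|apply in_span_cat_states, Heig].
    intros j n Hj. symmetry. apply cat_state_as_coh_sum, Hj.
  - apply (eigenspace_of_in_span alpha beta Halpha Hbeta k Hk z Hz Hdisc k _ coh_profile).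
    + intros l n. apply coh_rotate_ucoh.
    + apply coh_profile_periodic.
Qed.

End CatStates.

Theorem proposition2 (alpha beta : list R)
  (Halpha : List.Forall (fun a => 0 < a) alpha)
  (Hbeta : List.Forall (fun b => 0 < b) beta)
  (k : nat) (Hk : (1 <= k)%nat) (z : C) (Hz : z <> RtoC 0)
  (Hdisc : inside_disc alpha beta (Cmod z ^ 2)) :
  (forall j : nat, (j < k)%nat ->
     forall m : nat,
       csum k (fun l =>
         RtoC (/ INR k * sqrt (hypF alpha beta (Cmod z ^ 2)
                               / hypFkj alpha beta k j (Cmod z ^ 2)))
         * cis (- (2 * PI * INR j * INR l / INR k))
         * coh alpha beta (z * cis (2 * PI * INR l / INR k)) m)%C
       = cat_state alpha beta k j z m) /\
  (forall j : nat, (j < k)%nat ->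
     eigenspace alpha beta k (z ^ k)%C (cat_state alpha beta k j z)) /\
  (forall i j : nat, (i < k)%nat -> (j < k)%nat ->
     inner_is (cat_state alpha beta k i z) (cat_state alpha beta k j z)
       (if Nat.eqb i j then RtoC 1 else RtoC 0)) /\
  (forall psi : nat -> C,
     eigenspace alpha beta k (z ^ k)%C psi <->
     in_span k (fun j => cat_state alpha beta k j z) psi) /\
  (forall psi : nat -> C,
     eigenspace alpha beta k (z ^ k)%C psi <->
     in_span k (fun l => coh alpha beta (z * cis (2 * PI * INR l / INR k))) psi).
Proof.
  split; [intros j Hj m; apply cat_state_as_coh_sum; assumption|].
  split; [intros j _; apply cat_state_eigenspace; assumption|].
  split; [intros i j Hi Hj; apply cat_state_orthonormal; assumption|].
  split; intros psi.
  - apply eigenspace_iff_in_span_cat_states; assumption.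
  - apply eigenspace_iff_in_span_coh; assumption.
Qed.
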